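(* Let $n\ge 3$ and let $K_n$ be the complete graph on $n$ vertices with every edge having conductance $1$. Let $r\ne s$ be vertices, let $R_{rs}$ be the effective resistance between $r$ and $s$ in $K_n$, and let $(a,b)$ be an edge. Let $R'_{rs}$ be the effective resistance between $r$ and $s$ after the edge $(a,b)$ is altered, and write $R'_{rs}=R_{rs}-\Delta$. (1) If the resistance of $(a,b)$ goes to $0$ (its conductance tends to $+\infty$, with $R'_{rs}$ understood as the limit), then $\Delta=\frac{2}{n}$ if $\{a,b\}=\{r,s\}$; $\Delta=\frac{1}{2n}$ if $\{a,b\}$ and $\{r,s\}$ share exactly one vertex; and $\Delta=0$ if $\{a,b\}\cap\{r,s\}=\emptyset$. (2) If the resistance of $(a,b)$ goes to $+\infty$ (the edge is removed), then $\Delta=-\frac{4}{n(n-2)}$ if $\{a,b\}=\{r,s\}$; $\Delta=-\frac{1}{n(n-2)}$ if $\{a,b\}$ and $\{r,s\}$ share exactly one vertex; and $\Delta=0$ if $\{a,b\}\cap\{r,s\}=\emptyset$.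
   Context: For vertices $r,s$ of an electrical network (a graph with edge conductances), the effective resistance between them is the reciprocal of the net current flowing through the network when a unit voltage difference is applied between $r$ and $s$. *)

From HB Require Import structures.
From mathcomp Require Import all_boot all_order all_algebra.
From mathcomp Require Import all_classical all_reals all_analysis.
Set Implicit Arguments. Unset Strict Implicit. Unset Printing Implicit Defensive.
Import Order.TTheory GRing.Theory Num.Theory.
Local Open Scope ring_scope.
Local Open Scope classical_set_scope.

(* An electrical network on a finite vertex type V is given by a
   (symmetric) conductance function c : V -> V -> R; c x y = 0 means no edge. *)

Definition unit_potential (R : realType) (V : finType) (c : V -> V -> R)
    (r s : V) (v : V -> R) : Prop :=
  [/\ v r = 1, v s = 0 &
      forall x, x != r -> x != s -> \sum_(y : V) c x y * (v x - v y) = 0].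

Definition net_current (R : realType) (V : finType) (c : V -> V -> R)
    (r : V) (v : V -> R) : R :=
  \sum_(y : V) c r y * (v r - v y).

Definition is_eff_res (R : realType) (V : finType) (c : V -> V -> R)
    (r s : V) (Reff : R) : Prop :=
  exists v, unit_potential c r s v /\ Reff = (net_current c r v)^-1.

(* The effective resistance (as a number): the value Reff such that
   is_eff_res holds (it exists and is unique for connected networks). *)
Definition eff_res (R : realType) (V : finType) (c : V -> V -> R)
    (r s : V) : R :=
  xget 0 [set Reff | is_eff_res c r s Reff].

Definition KN (R : realType) (n : nat) : 'I_n -> 'I_n -> R :=
  fun x y => (x != y)%:R.

Definition KN_alter (R : realType) (n : nat) (a b : 'I_n) (t : R)
    : 'I_n -> 'I_n -> R :=
  fun x y => if ([set x; y] == [set a; b])%SET then t else KN R x y.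

(* A unit potential of a connected network is unique: the difference w of two
   of them is harmonic off {r, s} and vanishes at r and s, so by Green's identity
   its energy \sum c x y (w x - w y)^2 is 0 and w is constant along edges.  Hence
   the effective resistance is the reciprocal of the current of any unit
   potential one can exhibit.  In K_n with the conductance of {a, b} set to t,
   symmetry suggests potentials taking the value q off {r, s, b}, where b is the
   endpoint of the altered edge outside {r, s}; Kirchhoff's law then gives
     2 / (2t + n - 2)                     if {a, b} = {r, s},
     (3t + 2n - 3) / (n (2t + n - 2))     if {a, b} meets {r, s} once,
     2 / n                                if they are disjoint,
   and the theorem follows by letting t -> +oo and by comparing t = 0 with t = 1. *)

From HB Require Import structures.
From mathcomp Require Import all_boot all_order all_algebra.
From mathcomp Require Import all_classical all_reals all_analysis.
From mathcomp Require Import ring lra.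
Set Implicit Arguments. Unset Strict Implicit. Unset Printing Implicit Defensive.
Import Order.TTheory GRing.Theory Num.Theory.
Local Open Scope classical_set_scope.
Local Open Scope ring_scope.

Lemma card_set2I (T : finType) (a b : T) (S : {set T}) : a != b ->
  #|[set a; b] :&: S|%SET = ((a \in S) + (b \in S))%N.
Proof.
move=> ab; rewrite (cardsD1 a) (cardsD1 b) addnA !inE !eqxx (eq_sym b) ab /= orbT.
suff -> : ([set a; b] :&: S :\ a :\ b = finset.set0)%SET by rewrite cards0 addn0.
by apply/setP => x; rewrite !inE; case: eqP => //= _; case: eqP.
Qed.

Section Network.
Variables (R : realType) (V : finType) (c : V -> V -> R).
Hypothesis c_sym : forall x y, c x y = c y x.
Hypothesis c_ge0 : forall x y, 0 <= c x y.

Definition adj : rel V := fun x y => 0 < c x y.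

Lemma sum_net_current_eq0 (v : V -> R) : \sum_x net_current c x v = 0.
Proof.
have sum_opp : \sum_x net_current c x v = - \sum_x net_current c x v.
  rewrite /net_current {1}exchange_big -sumrN; apply: eq_bigr => x _.
  by rewrite -sumrN; apply: eq_bigr => y _; rewrite c_sym; ring.
lra.
Qed.

Lemma green_identity (w : V -> R) :
  \sum_x \sum_y c x y * (w x - w y) ^+ 2 = 2 * \sum_x w x * net_current c x w.
Proof.
have swap : \sum_x \sum_y c x y * w y * (w x - w y) =
            - \sum_x w x * net_current c x w.
  rewrite exchange_big -sumrN; apply: eq_bigr => x _.
  rewrite /net_current mulr_sumr -sumrN; apply: eq_bigr => y _.
  by rewrite c_sym; ring.
rewrite mulr2n mulrDl mul1r -{2}[\sum_x w x * _]opprK -swap -sumrB.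
apply: eq_bigr => x _; rewrite /net_current mulr_sumr -sumrB.
by apply: eq_bigr => y _; ring.
Qed.

Lemma energy0_adj_eq {w : V -> R} :
  \sum_x \sum_y c x y * (w x - w y) ^+ 2 = 0 -> forall x y, adj x y -> w x = w y.
Proof.
move=> E0 x y cxy.
have term_ge0 x' y' : 0 <= c x' y' * (w x' - w y') ^+ 2.
  exact: mulr_ge0 (c_ge0 _ _) (sqr_ge0 _).
have row0 : \sum_y' c x y' * (w x - w y') ^+ 2 = 0.
  by apply: (psumr_eq0P _ E0) => // x' _; apply: sumr_ge0 => y' _.
have /eqP : c x y * (w x - w y) ^+ 2 = 0 by apply: (psumr_eq0P _ row0).
by rewrite mulf_eq0 (gt_eqF cxy) sqrf_eq0 subr_eq0 => /eqP.
Qed.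

Lemma connect_adj_eq {w : V -> R} :
  (forall x y, adj x y -> w x = w y) -> forall {x y}, connect adj x y -> w x = w y.
Proof.
move=> w_adj x y /connectP [p + ->]; elim: p x => //= z p IH x /andP [xz pz].
by rewrite (w_adj _ _ xz); apply: IH.
Qed.

Hypothesis c_connected : forall x y, connect adj x y.

Lemma unit_potential_unique {r s : V} {v v' : V -> R} :
  unit_potential c r s v -> unit_potential c r s v' -> v = v'.
Proof.
move=> [vr vs v_harm] [v'r v's v'_harm].
pose w x := v' x - v x.
have w_net x : w x * net_current c x w = 0.
  have [->|xr] := eqVneq x r; first by rewrite /w vr v'r subrr mul0r.
  have [->|xs] := eqVneq x s; first by rewrite /w vs v's subrr mul0r.
  have -> : net_current c x w = net_current c x v' - net_current c x v.
    by rewrite /net_current -sumrB; apply: eq_bigr => y _; rewrite /w; ring.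
  by rewrite /net_current v_harm // v'_harm // subrr mulr0.
have E0 : \sum_x \sum_y c x y * (w x - w y) ^+ 2 = 0.
  by rewrite green_identity big1 ?mulr0.
apply/funext => z; apply/eqP; rewrite eq_sym -subr_eq0; apply/eqP.
have -> : v' z - v z = w r := connect_adj_eq (energy0_adj_eq E0) (c_connected z r).
by rewrite /w vr v'r subrr.
Qed.

Lemma eff_resE r s v :
  unit_potential c r s v -> eff_res c r s = (net_current c r v)^-1.
Proof.
move=> hv; apply: xget_unique; first by exists v.
by move=> _ [v' [hv' ->]]; rewrite (unit_potential_unique hv' hv).
Qed.

Lemma is_eff_resC r s Reff :
  r != s -> is_eff_res c r s Reff -> is_eff_res c s r Reff.
Proof.
move=> rs [v [[vr vs v_harm] ->]]; exists (fun x => 1 - v x); split.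
  split=> [||x xs xr]; rewrite ?vr ?vs ?subr0 ?subrr //.
  transitivity (- \sum_y c x y * (v x - v y)); last by rewrite v_harm ?oppr0.
  by rewrite -sumrN; apply: eq_bigr => y _; ring.
have net_rs : net_current c r v + net_current c s v = 0.
  rewrite -(sum_net_current_eq0 v) (bigD1 r) // (bigD1 s) 1?eq_sym //=.
  by rewrite [X in _ + (_ + X)]big1 ?addr0 // => x /andP [xs xr]; apply: v_harm.
have -> : net_current c s (fun x => 1 - v x) = - net_current c s v.
  by rewrite /net_current -sumrN; apply: eq_bigr => y _; ring.
by congr (_^-1); lra.
Qed.

Lemma eff_resC r s : r != s -> eff_res c r s = eff_res c s r.
Proof.
move=> rs; congr (xget 0 _); apply/seteqP; split=> Reff /=.
  exact: is_eff_resC.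
by apply: is_eff_resC; rewrite eq_sym.
Qed.

End Network.

Section CompleteGraph.
Variables (R : realType) (n : nat).
Implicit Types (a b r s x y z : 'I_n) (t : R) (v : 'I_n -> R).

Lemma set2_eqE a b x y : a != b ->
  ([set x; y] == [set a; b])%SET = ((x == a) && (y == b)) || ((x == b) && (y == a)).
Proof.
move=> ab; apply/eqP/idP => [xy_ab|]; last first.
  by case/orP=> /andP[/eqP-> /eqP->] //; apply: finset.setUC.
have x_ab : x \in [set a; b]%SET by rewrite -xy_ab set21.
have a_xy : a \in [set x; y]%SET by rewrite xy_ab set21.
have b_xy : b \in [set x; y]%SET by rewrite xy_ab set22.
move: x_ab a_xy b_xy; rewrite !inE; have [-> _ _|xa /= /eqP-> + _] := eqVneq x a.
  by rewrite (eq_sym b) (negbTE ab) /= => /eqP->; rewrite eqxx.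
by move=> /eqP->; rewrite !eqxx.
Qed.

Lemma KN_alterC a b t : KN_alter a b t = KN_alter b a t.
Proof. by rewrite /KN_alter finset.setUC. Qed.

Lemma KN_alter_sym a b t x y : KN_alter a b t x y = KN_alter a b t y x.
Proof.
by rewrite /KN_alter /KN (eq_sym y) [in [set y; x]%SET]finset.setUC.
Qed.

Lemma KN_alter_ge0 a b t x y : 0 <= t -> 0 <= KN_alter a b t x y.
Proof. by move=> t_ge0; rewrite /KN_alter /KN; case: ifP. Qed.

Lemma KN_alter1 a b : a != b -> @KN R n = KN_alter a b 1.
Proof.
move=> ab; apply/funext => x; apply/funext => y; rewrite /KN_alter /KN.
case: ifPn => //; rewrite set2_eqE // => /orP[]/andP[/eqP-> /eqP->].
  by rewrite ab.
by rewrite eq_sym ab.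
Qed.

Lemma KN_alterE a b t x y : a != b ->
  KN_alter a b t x y =
    (x != y)%:R + (t - 1) * (((x == a) && (y == b)) || ((x == b) && (y == a)))%:R.
Proof.
move=> ab; rewrite /KN_alter /KN set2_eqE //.
case: ifP => [/orP[]/andP[/eqP-> /eqP->]|_]; last by rewrite mulr0 addr0.
  by rewrite ab mulr1 addrC subrK.
by rewrite eq_sym ab mulr1 addrC subrK.
Qed.

Lemma KN_alter_connected a b t : (3 <= n)%N -> 0 <= t -> a != b ->
  forall x y, connect (adj (KN_alter a b t)) x y.
Proof.
move=> n_ge3 t_ge0 ab.
have edge x y : x != y -> ([set x; y] != [set a; b])%SET -> adj (KN_alter a b t) x y.
  by move=> xy xy_ab; rewrite /adj /KN_alter (negbTE xy_ab) /KN xy ltr01.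
move=> x y; have [<-|xy] := eqVneq x y; first exact: connect0.
have [xy_ab|xy_nab] := eqVneq [set x; y]%SET [set a; b]%SET; last first.
  by apply: connect1; apply: edge.
have [z zxy] : exists z, z \notin [set x; y]%SET.
  apply/existsP; rewrite -negb_forall; apply/negP => /forallP all_xy.
  have : (#|'I_n| <= #|[set x; y]%SET|)%N.
    by apply/subset_leq_card/fintype.subsetP => z _; apply: all_xy.
  by rewrite card_ord cards2 xy; case: n n_ge3 => [|[|[|]]].
move: zxy; rewrite !inE negb_or => /andP [zx zy].
have z_notin : z \notin [set a; b]%SET by rewrite -xy_ab !inE negb_or zx zy.
have new_edge u w : z \in [set u; w]%SET -> ([set u; w] != [set a; b])%SET.
  by move=> zuw; apply: contraNneq z_notin => <-.
apply: (@connect_trans _ _ z); apply/connect1/edge.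
- by rewrite eq_sym.
- by apply: new_edge; rewrite !inE eqxx orbT.
- exact: zy.
- by apply: new_edge; rewrite !inE eqxx.
Qed.

Lemma sum_indicator b (F : 'I_n -> R) : \sum_y (y == b)%:R * F y = F b.
Proof.
by rewrite (bigD1 b) //= eqxx mul1r big1 ?addr0 // => y /negbTE ->; rewrite mul0r.
Qed.

Lemma net_current_KN_alter a b t x v : a != b ->
  net_current (KN_alter a b t) x v =
    n%:R * v x - \sum_y v y +
    (t - 1) * (if x == a then v a - v b else if x == b then v b - v a else 0).
Proof.
move=> ab; rewrite /net_current.
under eq_bigr => y _ do rewrite KN_alterE // mulrDl.
rewrite big_split /=; congr (_ + _).
  have -> : n%:R * v x = \sum_(y : 'I_n) v x by rewrite sumr_const card_ord mulr_natl.
  rewrite -sumrB; apply: eq_bigr => y _.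
  by have [->|] := eqVneq x y; rewrite ?subrr ?mulr0 ?mul1r.
under eq_bigr => y _ do rewrite -mulrA.
rewrite -mulr_sumr; congr (_ * _).
have [->|xa] := eqVneq x a.
  by under eq_bigr => y _ do rewrite (negbTE ab) andTb andFb orbF; rewrite sum_indicator.
have [->|xb] := eqVneq x b; last by rewrite big1 // => y _; rewrite !andFb mul0r.
by under eq_bigr => y _ do rewrite andFb andTb; rewrite sum_indicator.
Qed.

Definition spikes (q al be ga : R) r s b : 'I_n -> R :=
  fun y => q + (y == r)%:R * al + (y == s)%:R * be + (y == b)%:R * ga.

Lemma sum_spikes q al be ga r s b :
  \sum_y spikes q al be ga r s b y = n%:R * q + al + be + ga.
Proof.
rewrite !big_split /= sumr_const card_ord mulr_natl.
by rewrite !(sum_indicator _ (fun=> _)).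
Qed.

Lemma eff_res_KN_alterE a b r s t v : (3 <= n)%N -> a != b -> 0 <= t ->
  unit_potential (KN_alter a b t) r s v ->
  eff_res (KN_alter a b t) r s = (net_current (KN_alter a b t) r v)^-1.
Proof.
move=> n_ge3 ab t_ge0; apply: eff_resE.
- exact: KN_alter_sym.
- by move=> x y; apply: KN_alter_ge0.
- exact: KN_alter_connected.
Qed.

Lemma eff_res_KN_alter_same a b r s t : (3 <= n)%N -> r != s -> 0 <= t ->
  [set a; b]%SET = [set r; s]%SET ->
  eff_res (KN_alter a b t) r s = 2 / (2 * t + n%:R - 2).
Proof.
move=> n_ge3 rs t_ge0 /eqP; rewrite set2_eqE // => ab_rs.
have -> : KN_alter a b t = KN_alter r s t.
  by case/orP: ab_rs => /andP [/eqP-> /eqP->]; rewrite // KN_alterC.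
have n_ge3R : (3 : R) <= n%:R by rewrite ler_nat.
have sr : (s == r) = false by rewrite eq_sym (negbTE rs).
pose v := spikes (1/2) (1/2) (- (1/2)) 0 r s r.
rewrite (@eff_res_KN_alterE _ _ _ _ _ v) //.
  rewrite net_current_KN_alter // sum_spikes eqxx /v /spikes !eqxx sr (negbTE rs) /=.
  by field; lra.
split=> [||x xr xs].
- by rewrite /v /spikes eqxx (negbTE rs) /=; field.
- by rewrite /v /spikes eqxx sr /=; field.
rewrite -[LHS]/(net_current _ x _) net_current_KN_alter // sum_spikes.
by rewrite /v /spikes (negbTE xr) (negbTE xs) /=; field.
Qed.

Lemma eff_res_KN_alter_disjoint a b r s t : (3 <= n)%N -> r != s -> a != b -> 0 <= t ->
  #|[set a; b] :&: [set r; s]|%SET = 0%N ->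
  eff_res (KN_alter a b t) r s = 2 / n%:R.
Proof.
move=> n_ge3 rs ab t_ge0; rewrite card_set2I // !inE => /eqP.
rewrite addn_eq0 !eqb0 !negb_or => /andP [/andP [ar as_] /andP [br bs]].
have n_ge3R : (3 : R) <= n%:R by rewrite ler_nat.
have sr : (s == r) = false by rewrite eq_sym (negbTE rs).
pose v := spikes (1/2) (1/2) (- (1/2)) 0 r s r.
have v_other x : x != r -> x != s -> v x = 1/2.
  by move=> xr xs; rewrite /v /spikes (negbTE xr) (negbTE xs) /=; field.
rewrite (@eff_res_KN_alterE _ _ _ _ _ v) //.
  rewrite net_current_KN_alter // sum_spikes eq_sym (negbTE ar) eq_sym (negbTE br).
  by rewrite /v /spikes eqxx (negbTE rs) /=; field; lra.
split=> [||x xr xs].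
- by rewrite /v /spikes eqxx (negbTE rs) /=; field.
- by rewrite /v /spikes eqxx sr /=; field.
rewrite -[LHS]/(net_current _ x _) net_current_KN_alter // sum_spikes.
by rewrite v_other // (v_other a) // (v_other b) // !subrr !if_same; field.
Qed.

Lemma eff_res_KN_alter_incident b r s t : (3 <= n)%N -> r != s -> 0 <= t ->
  b != r -> b != s ->
  eff_res (KN_alter r b t) r s = (3 * t + 2 * n%:R - 3) / (n%:R * (2 * t + n%:R - 2)).
Proof.
move=> n_ge3 rs t_ge0 br bs; have n_ge3R : (3 : R) <= n%:R by rewrite ler_nat.
have sr : (s == r) = false by rewrite eq_sym (negbTE rs).
have rb : r != b by rewrite eq_sym.
(* p and q, the potentials at b and off {r, s, b}, solve Kirchhoff's law at b
   and at any other vertex. *)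
pose D : R := 3 * t + 2 * n%:R - 3.
have D_neq0 : D != 0 by apply/eqP; rewrite /D; lra.
pose p := (3 * t + n%:R - 3) / D.
pose q := (2 * t + n%:R - 2) / D.
pose v := spikes q (1 - q) (- q) (p - q) r s b.
rewrite (@eff_res_KN_alterE _ _ _ _ _ v) //; last first.
  split=> [||x xr xs];
    rewrite /v /spikes ?eqxx ?sr ?(negbTE bs) ?(negbTE rb) ?(negbTE rs) /=.
  - by ring.
  - by rewrite (eq_sym s) (negbTE bs) /=; ring.
  rewrite -[LHS]/(net_current _ x _) net_current_KN_alter // sum_spikes (negbTE xr).
  have [->|xb] := eqVneq x b.
    rewrite !eqxx (negbTE br) (negbTE bs) (negbTE rs) (negbTE rb) /=.
    by rewrite /p /q /D; field; lra.
  by rewrite (negbTE xs) /= /p /q /D; field; lra.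
rewrite net_current_KN_alter // sum_spikes eqxx.
rewrite /v /spikes !eqxx (negbTE rs) (negbTE rb) (negbTE br) (negbTE bs) /=.
rewrite [X in X^-1 = _](_ : _ = n%:R * (2 * t + n%:R - 2) / D) ?invf_div //.
by rewrite /p /q /D; field; lra.
Qed.

Lemma eff_res_KN_alter_meet1 a b r s t : (3 <= n)%N -> r != s -> a != b -> 0 <= t ->
  #|[set a; b] :&: [set r; s]|%SET = 1%N ->
  eff_res (KN_alter a b t) r s = (3 * t + 2 * n%:R - 3) / (n%:R * (2 * t + n%:R - 2)).
Proof.
move=> n_ge3 rs ab t_ge0; rewrite card_set2I // !inE.
wlog a_rs : a b ab / (a == r) || (a == s).
  move=> wlog_a overlap1; have [a_rs|a_nrs] := boolP ((a == r) || (a == s)).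
    exact: wlog_a.
  have b_rs : (b == r) || (b == s).
    by move: overlap1; rewrite (negbTE a_nrs); case: (_ || _).
  by rewrite KN_alterC; apply: wlog_a; rewrite 1?addnC // eq_sym.
rewrite a_rs add1n => /eqP; rewrite eqSS eqb0 negb_or => /andP [br bs].
case/orP: a_rs => /eqP ->; first exact: eff_res_KN_alter_incident.
rewrite (eff_resC (KN_alter_sym s b t)) //.
by apply: eff_res_KN_alter_incident; rewrite // eq_sym.
Qed.

End CompleteGraph.

Lemma cvg_pinfty_hyperbolic (R : realType) (f : R -> R) (L K c : R) : 0 < c ->
  (forall t, 0 <= t -> f t = L + K / (t + c)) -> f t @[t --> +oo] --> (L : R^o).
Proof.
move=> c_gt0 f_eq.
have t_ge0 : \forall t \near +oo, (0 : R) <= t by apply: nbhs_pinfty_ge; rewrite real0.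
have f_near : \forall t \near +oo, L + K / (t + c) = f t.
  by near=> t; rewrite f_eq //; near: t.
apply: cvg_trans (near_eq_cvg f_near) _.
suff : L + K / (t + c) @[t --> +oo] --> (L + K * 0 : R^o) by rewrite mulr0 addr0.
apply: cvgD; first exact: cvg_cst.
apply: cvgMl_tmp.
have /gtr0_cvgV0 -> : \forall t \near +oo, 0 < t + c.
  by near=> t; rewrite ltr_wpDl //; near: t.
exact: cvg_addrr.
Unshelve. all: by end_near.
Qed.

Theorem lemmaB1 (R : realType) (n : nat) (r s a b : 'I_n) :
  (3 <= n)%N -> r != s -> a != b ->
  let Rrs := eff_res (@KN R n) r s in
  let Rshort := fun t : R => eff_res (KN_alter a b t) r s in
  let Rcut := eff_res (KN_alter a b (0 : R)) r s in
  (* (1) the resistance of (a,b) goes to 0: conductance t -> +oo *)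
  [/\ ([set a; b]%SET = [set r; s]%SET ->
         Rshort t @[t --> +oo] --> Rrs - 2 / n%:R),
      (#|([set a; b] :&: [set r; s])%SET| = 1%N ->
         Rshort t @[t --> +oo] --> Rrs - 1 / (2 * n%:R)) &
      (#|([set a; b] :&: [set r; s])%SET| = 0%N ->
         Rshort t @[t --> +oo] --> Rrs - 0)]
  /\
  (* (2) the resistance of (a,b) goes to +oo: the edge is removed *)
  [/\ ([set a; b]%SET = [set r; s]%SET ->
         Rcut = Rrs - - (4 / (n%:R * (n%:R - 2)))),
      (#|([set a; b] :&: [set r; s])%SET| = 1%N ->
         Rcut = Rrs - - (1 / (n%:R * (n%:R - 2)))) &
      (#|([set a; b] :&: [set r; s])%SET| = 0%N ->
         Rcut = Rrs - 0)].
Proof.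
move=> n_ge3 rs ab Rrs Rshort Rcut; rewrite {}/Rrs {}/Rshort {}/Rcut (KN_alter1 _ ab).
have n_ge3R : (3 : R) <= n%:R by rewrite ler_nat.
split; split=> overlap.
- apply: (@cvg_pinfty_hyperbolic _ _ _ 1 ((n%:R - 2) / 2)); first lra.
  by move=> t t_ge0; rewrite !eff_res_KN_alter_same //; field; lra.
- apply: (@cvg_pinfty_hyperbolic _ _ _ (1 / 4) ((n%:R - 2) / 2)); first lra.
  by move=> t t_ge0; rewrite !eff_res_KN_alter_meet1 //; field; lra.
- apply: (@cvg_pinfty_hyperbolic _ _ _ 0 1); first lra.
  by move=> t t_ge0; rewrite !eff_res_KN_alter_disjoint // mul0r !subr0 addr0.
- by rewrite !eff_res_KN_alter_same //; field; lra.
- by rewrite !eff_res_KN_alter_meet1 //; field; lra.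
- by rewrite !eff_res_KN_alter_disjoint // subr0.
Qed.
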